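(* Let $(A,S_A)$ and $(B,S_B)$ be objects of $\mathsf{SubS5^S}$ and let $T\colon(A,S_A)\to(B,S_B)$ and $Q\colon(B,S_B)\to(A,S_A)$ be morphisms of $\mathsf{SubS5^S}$ that are inverse to each other. Suppose $(A,S_A)$ is a de Vries algebra. Then: (1) for all $a_1,a_2\in A$: $a_1\le a_2\iff T[a_1]\supseteq T[a_2]\iff Q^{-1}[a_1]\subseteq Q^{-1}[a_2]$; (2) for all $a\in A$: $Q^{-1}[a]=S_B^{-1}[L(T[a])]$ and $T[a]=S_B[U(Q^{-1}[a])]$.
   Context: A subordination $S\colon A\to B$ between boolean algebras is a relation with (S1) $0\mathrel{S}0$, $1\mathrel{S}1$; (S2) $a,b\mathrel{S}c\Rightarrow(a\vee b)\mathrel{S}c$; (S3) $a\mathrel{S}c,d\Rightarrow a\mathrel{S}(c\wedge d)$; (S4) $a\le b\mathrel{S}c\le d\Rightarrow a\mathrel{S}d$. An $\mathsf{S5}$-subordination on $B$ also satisfies (S5) $a\mathrel{S}b\Rightarrow a\le b$; (S6) $a\mathrel{S}b\Rightarrow\neg b\mathrel{S}\neg a$; (S7) $a\mathrel{S}b\Rightarrow\exists c\,(a\mathrel{S}c\mathrel{S}b)$. $\mathsf{SubS5^S}$: objects $(B,S)$ with $S$ an $\mathsf{S5}$-subordination on $B$; morphisms $(B,S)\to(B',S')$ are subordinations $T$ with $T\circ S=T=S'\circ T$; identity on $(B,S)$ is $S$; composition relational ($a\mathrel{(T_2\circ T_1)}c$ iff $\exists b$, $a\mathrel{T_1}b\mathrel{T_2}c$).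 A de Vries algebra is $(B,S)$ in $\mathsf{SubS5^S}$ with $B$ complete and (S8) $a\ne0\Rightarrow\exists b\ne0,\ b\mathrel{S}a$. Notation: $T[a]=\{b\mid a\mathrel{T}b\}$, $Q^{-1}[a]=\{b\mid b\mathrel{Q}a\}$; for a set $X$, $S_B[X]=\{c\mid\exists x\in X,\ x\mathrel{S_B}c\}$ and $S_B^{-1}[X]=\{c\mid\exists x\in X,\ c\mathrel{S_B}x\}$; $U(X)$ and $L(X)$ are the sets of upper and lower bounds of $X$ in $B$. *)

(* boolean algebras are complemented distributive lattices
   with top and bottom ([ctbDistrLatticeType d]); relations are Prop-valued. *)
From HB Require Import structures.
From mathcomp Require Import all_boot all_order.
Set Implicit Arguments. Unset Strict Implicit. Unset Printing Implicit Defensive.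
Import Order.TTheory.
Local Open Scope order_scope.


(* relational composition: a (T2 o T1) c iff exists b, a T1 b T2 c *)
Definition rcomp {X Y Z : Type} (T1 : X -> Y -> Prop) (T2 : Y -> Z -> Prop)
  : X -> Z -> Prop := fun a c => exists b, T1 a b /\ T2 b c.

Definition releq {X Y : Type} (R1 R2 : X -> Y -> Prop) : Prop :=
  forall a b, R1 a b <-> R2 a b.

(* (S1)-(S4) *)
Definition subordination {dA dB : Order.disp_t} (A : ctbDistrLatticeType dA) (B : ctbDistrLatticeType dB)
  (S : A -> B -> Prop) : Prop :=
  [/\ S \bot \bot /\ S \top \top,
      (forall a b c, S a c -> S b c -> S (a `|` b) c),
      (forall a c d, S a c -> S a d -> S a (c `&` d)) &
      (forall a b c d, a <= b -> S b c -> c <= d -> S a d)].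

(* S5-subordination on B: (S1)-(S7) *)
Definition S5_subordination {dB : Order.disp_t} (B : ctbDistrLatticeType dB) (S : B -> B -> Prop)
  : Prop :=
  [/\ subordination S,
      (forall a b, S a b -> a <= b),
      (forall a b, S a b -> S (~` b) (~` a)) &
      (forall a b, S a b -> exists c, S a c /\ S c b)].

(* morphism (A,SA) -> (B,SB) of SubS5^S: subordination T with T o SA = T = SB o T *)
Definition SubS5S_morphism {dA dB : Order.disp_t} (A : ctbDistrLatticeType dA) (B : ctbDistrLatticeType dB)
  (SA : A -> A -> Prop) (SB : B -> B -> Prop) (T : A -> B -> Prop) : Prop :=
  [/\ subordination T, releq (rcomp SA T) T & releq (rcomp T SB) T].

Definition complete_lattice {dA : Order.disp_t} (A : ctbDistrLatticeType dA) : Prop :=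
  forall X : A -> Prop, exists s : A,
    (forall x, X x -> x <= s) /\ (forall u, (forall x, X x -> x <= u) -> s <= u).

(* de Vries algebra: object of SubS5^S, complete, and (S8) *)
Definition de_Vries {dA : Order.disp_t} (A : ctbDistrLatticeType dA) (S : A -> A -> Prop) : Prop :=
  [/\ S5_subordination S, complete_lattice A &
      (forall a : A, a != \bot -> exists b, b != \bot /\ S b a)].

(* In a de Vries algebra, (S5) and (S8) make an element determined by what it
   is subordinated to: if every e with e S x also satisfies e S y, then x <= y,
   since otherwise (S8) gives a non-zero e S (x `&` ~` y), which (S5) forces
   below both y and ~` y.  Because T and Q are mutually inverse, e SA a holds
   iff e is reached from a through some b with a T b Q e, so comparisons of
   T-images and Q-preimages transfer to comparisons of SA-images and hence to
   the order of A.  Part (2) then follows from SB = T o Q, SB o T = T and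
   Q o SB = Q together with (S5) for SB. *)

From HB Require Import structures.
From mathcomp Require Import all_boot all_order.
Set Implicit Arguments. Unset Strict Implicit. Unset Printing Implicit Defensive.
Import Order.TTheory Order.Theory.
Local Open Scope order_scope.

Lemma subordination_mono (dA dB : Order.disp_t)
    (A : ctbDistrLatticeType dA) (B : ctbDistrLatticeType dB) (S : A -> B -> Prop)
    (a b : A) (c d : B) :
  subordination S -> a <= b -> S b c -> c <= d -> S a d.
Proof. by case=> _ _ _ S4; apply: S4. Qed.

Section DeVriesSeparation.

Variables (d : Order.disp_t) (A : ctbDistrLatticeType d) (S : A -> A -> Prop).
Hypothesis dV : de_Vries S.

Lemma de_Vries_le_of_subordinated (x y : A) :
  (forall e, S e x -> S e y) -> x <= y.
Proof.
have [[Ssub S5 _ _] _ S8] := dV.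
move=> Sxy; case: (boolP (x <= y)) => // nxy.
have [e [e_neq0 Se]] : exists e, e != \bot /\ S e (x `&` ~` y).
  by apply: S8; rewrite -diffE diff_eq0.
have e_le_ny : e <= ~` y := le_trans (S5 _ _ Se) (leIr _ _).
have e_le_y : e <= y.
  by apply/S5/Sxy; apply: subordination_mono Se (leIl _ _).
have : e <= y `&` ~` y by rewrite lexI e_le_y.
by rewrite meetxC lex0 (negbTE e_neq0).
Qed.

Lemma de_Vries_le_of_subordinate (x y : A) :
  (forall e, S y e -> S x e) -> x <= y.
Proof.
have [[_ _ S6 _] _ _] := dV.
move=> Syx; rewrite -leC; apply: de_Vries_le_of_subordinated => e /S6.
by rewrite complK => /Syx /S6; rewrite complK.
Qed.

End DeVriesSeparation.

Section InverseMorphisms.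

Variables (dA dB : Order.disp_t).
Variables (A : ctbDistrLatticeType dA) (B : ctbDistrLatticeType dB).
Variables (SA : A -> A -> Prop) (SB : B -> B -> Prop).
Variables (T : A -> B -> Prop) (Q : B -> A -> Prop).
Hypotheses (Tsub : subordination T) (Qsub : subordination Q).
Hypotheses (TQ : releq (rcomp T Q) SA) (QT : releq (rcomp Q T) SB).
Hypothesis dV : de_Vries SA.

Lemma le_of_image_sub (a1 a2 : A) :
  (forall b, T a2 b -> T a1 b) -> a1 <= a2.
Proof.
move=> Ta21; apply: (de_Vries_le_of_subordinate dV) => e /TQ [b [Tb Qb]].
by apply/TQ; exists b; split; first exact: Ta21.
Qed.

Lemma le_of_preimage_sub (a1 a2 : A) :
  (forall b, Q b a1 -> Q b a2) -> a1 <= a2.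
Proof.
move=> Qa12; apply: (de_Vries_le_of_subordinated dV) => e /TQ [b [Tb Qb]].
by apply/TQ; exists b; split; last exact: Qa12.
Qed.

Hypothesis SB5 : forall b1 b2, SB b1 b2 -> b1 <= b2.
Hypotheses (QSB : releq (rcomp SB Q) Q) (SBT : releq (rcomp T SB) T).

Lemma preimage_le_image (a : A) (b1 b2 : B) : Q b1 a -> T a b2 -> b1 <= b2.
Proof. by move=> Qb1 Tb2; apply/SB5/QT; exists a. Qed.

Lemma preimage_lower_boundsE (a : A) (b : B) :
  Q b a <-> exists x, (forall y, T a y -> x <= y) /\ SB b x.
Proof.
split.
- move=> /QSB [x [SBbx Qxa]]; exists x; split=> // y.
  exact: preimage_le_image.
- move=> [x [x_lb /QT [a' [Qxa' Ta'x]]]].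
  apply: subordination_mono Qsub (lexx b) Qxa' _.
  apply: le_of_image_sub => y Tay.
  exact: subordination_mono Tsub (lexx a') Ta'x (x_lb _ Tay).
Qed.

Lemma image_upper_boundsE (a : A) (b : B) :
  T a b <-> exists x, (forall y, Q y a -> y <= x) /\ SB x b.
Proof.
split.
- move=> /SBT [x [Tax SBxb]]; exists x; split=> // y Qya.
  exact: preimage_le_image Qya Tax.
- move=> [x [x_ub /QT [a' [Qxa' Ta'b]]]].
  apply: subordination_mono Tsub _ Ta'b (lexx b).
  apply: le_of_preimage_sub => y Qya.
  exact: subordination_mono Qsub (x_ub _ Qya) Qxa' (lexx a').
Qed.

End InverseMorphisms.

Theorem lemma5p1 (dA dB : Order.disp_t)
  (A : ctbDistrLatticeType dA) (B : ctbDistrLatticeType dB)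
  (SA : A -> A -> Prop) (SB : B -> B -> Prop)
  (T : A -> B -> Prop) (Q : B -> A -> Prop) :
  S5_subordination SA -> S5_subordination SB ->
  SubS5S_morphism SA SB T -> SubS5S_morphism SB SA Q ->
  releq (rcomp T Q) SA -> releq (rcomp Q T) SB ->
  de_Vries SA ->
  (forall a1 a2 : A,
      (a1 <= a2 <-> (forall b, T a2 b -> T a1 b)) /\
      ((forall b, T a2 b -> T a1 b) <-> (forall b, Q b a1 -> Q b a2))) /\
  (forall a : A,
      (forall b : B, Q b a <->
         exists x : B, (forall y, T a y -> x <= y) /\ SB b x) /\
      (forall b : B, T a b <->
         exists x : B, (forall y, Q y a -> y <= x) /\ SB x b)).
Proof.
move=> _ [_ SB5 _ _] [Tsub _ SBT] [Qsub QSB _] TQ QT dV.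
have le_img := le_of_image_sub TQ dV.
have le_pre := le_of_preimage_sub TQ dV.
split=> [a1 a2 | a]; last first.
  by split=> b; [apply: preimage_lower_boundsE | apply: image_upper_boundsE].
split; split.
- by move=> le12 b Tb; apply: subordination_mono Tsub le12 Tb (lexx b).
- exact: le_img.
- by move=> /le_img le12 b Qb; apply: subordination_mono Qsub (lexx b) Qb le12.
- by move=> /le_pre le12 b Tb; apply: subordination_mono Tsub le12 Tb (lexx b).
Qed.
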